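(* In the category $\mathbf{Lens}$, the classes of all epimorphisms, regular epimorphisms, strong epimorphisms and extremal epimorphisms coincide.
   Context: A lens $F\colon \mathbf{A}\to\mathbf{B}$ between small categories consists of a functor $F\colon\mathbf{A}\to\mathbf{B}$ (the get functor) together with, for each object $A$ of $\mathbf{A}$, a function $\varphi_{F,A}$ from the set of morphisms of $\mathbf{B}$ with domain $FA$ to the set of morphisms of $\mathbf{A}$ with domain $A$, such that: $F(\varphi_{F,A}b)=b$; $\varphi_{F,A}(\mathrm{id}_{FA})=\mathrm{id}_A$; and $\varphi_{F,A}(b'\circ b)=\varphi_{F,A'}(b')\circ\varphi_{F,A}(b)$ whenever $b$ has domain $FA$, $A'$ is the codomain of $\varphi_{F,A}b$, and $b'$ has domain $FA'$. $\mathbf{Lens}$ is the category of small categories and lenses, with composite of $F\colon\mathbf{A}\to\mathbf{B}$, $G\colon\mathbf{B}\to\mathbf{C}$ having get functor $G\circ F$ and puts $\varphi_{G\circ F,A}(c)=\varphi_{F,A}(\varphi_{G,FA}(c))$. *)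

From Stdlib Require Import Eqdep.

Record Cat : Type := {
  Ob : Type;
  Hom : Ob -> Ob -> Type;
  idm : forall a, Hom a a;
  cmp : forall a b c, Hom b c -> Hom a b -> Hom a c;
  cmp_id_l : forall a b (f : Hom a b), cmp a b b (idm b) f = f;
  cmp_id_r : forall a b (f : Hom a b), cmp a a b f (idm a) = f;
  cmp_assoc : forall a b c d (f : Hom a b) (g : Hom b c) (h : Hom c d),
      cmp a c d h (cmp a b c g f) = cmp a b d (cmp b c d h g) f
}.
Arguments Hom {c0} _ _.
Arguments idm {c0} _.
Arguments cmp {c0 a b c} _ _.

(** A lens F : A -> B: a get functor (fo, fm) together with puts
    [put a b u] = φ_{F,a}(u) for u : F a -> b, returned as the dependent pair
    (codomain of φ_{F,a} u, φ_{F,a} u). *)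
Record Lens (A B : Cat) : Type := {
  fo : Ob A -> Ob B;
  fm : forall a a' : Ob A, Hom a a' -> Hom (fo a) (fo a');
  fm_id : forall a, fm a a (idm a) = idm (fo a);
  fm_cmp : forall a b c (f : Hom a b) (g : Hom b c),
      fm a c (cmp g f) = cmp (fm b c g) (fm a b f);
  put : forall (a : Ob A) (b : Ob B), Hom (fo a) b -> {a' : Ob A & Hom a a'};
  (* F (φ b) = b *)
  put_lift : forall a b (u : Hom (fo a) b),
      existT (fun y => Hom (fo a) y)
        (fo (projT1 (put a b u))) (fm a _ (projT2 (put a b u)))
      = existT (fun y => Hom (fo a) y) b u;
  put_id : forall a, put a (fo a) (idm (fo a)) = existT (fun y => Hom a y) a (idm a);
  (* φ_{A}(b' o b) = φ_{A'}(b') o φ_A(b), where A' is the codomain of φ_A(b)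
     (so b : F A -> F A') and b' has domain F A' *)
  put_cmp : forall a a' (u : Hom (fo a) (fo a')) (f : Hom a a'),
      put a (fo a') u = existT (fun y => Hom a y) a' f ->
      forall b (v : Hom (fo a') b),
        put a b (cmp v u)
        = existT (fun y => Hom a y) (projT1 (put a' b v))
                 (cmp (projT2 (put a' b v)) f)
}.
Arguments fo {A B} _ _.
Arguments fm {A B} _ {a a'} _.
Arguments put {A B} _ a {b} _.

Definition lid (A : Cat) : Lens A A.
Proof.
  refine {| fo := fun a => a;
            fm := fun a a' f => f;
            put := fun a b u => existT (fun y => Hom a y) b u |}.
  - reflexivity.
  - reflexivity.
  - reflexivity.
  - reflexivity.
  - intros a a' u f H b v. apply inj_pair2 in H. subst. reflexivity.
Defined.

(** Composite of F : A -> B and G : B -> C (diagrammatic order: [lcomp F G]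
    is G o F), with get functor G o F and puts φ_{GF,a}(c) = φ_{F,a}(φ_{G,Fa}(c)). *)
Definition lcomp {A B C : Cat} (F : Lens A B) (G : Lens B C) : Lens A C.
Proof.
  refine {| fo := fun a => fo G (fo F a);
            fm := fun a a' f => fm G (fm F f);
            put := fun a c w =>
              put F a (projT2 (put G (fo F a) w)) |}.
  - intros a. rewrite (fm_id _ _ F), (fm_id _ _ G). reflexivity.
  - intros a b c f g. rewrite (fm_cmp _ _ F), (fm_cmp _ _ G). reflexivity.
  - intros a c w.
    pose proof (put_lift _ _ F a _ (projT2 (put G (fo F a) w))) as LF.
    pose proof (f_equal (fun s : {y : Ob B & Hom (fo F a) y} =>
        existT (fun z => Hom (fo G (fo F a)) z) (fo G (projT1 s)) (fm G (projT2 s))) LF)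
      as LF'.
    simpl in LF'. rewrite LF'.
    exact (put_lift _ _ G (fo F a) c w).
  - intros a. simpl. rewrite (put_id _ _ G). simpl. exact (put_id _ _ F a).
  - intros a a' u f H c v. simpl in *.
    destruct (put G (fo F a) u) as [b1 g] eqn:EG. simpl in H.
    pose proof (put_lift _ _ F a b1 g) as LF. rewrite H in LF. simpl in LF.
    pose proof (projT1_eq LF) as e. simpl in e. subst b1.
    apply inj_pair2 in LF. subst g.
    rewrite (put_cmp _ _ G _ _ u _ EG c v).
    destruct (put G (fo F a') v) as [b2 w]. simpl.
    exact (put_cmp _ _ F a a' (fm F f) f H b2 w).
Defined.

Definition LensEpi {A B : Cat} (e : Lens A B) : Prop :=
  forall (C : Cat) (g h : Lens B C), lcomp e g = lcomp e h -> g = h.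

Definition LensMono {A B : Cat} (m : Lens A B) : Prop :=
  forall (C : Cat) (g h : Lens C A), lcomp g m = lcomp h m -> g = h.

Definition LensIso {A B : Cat} (m : Lens A B) : Prop :=
  exists m' : Lens B A, lcomp m m' = lid A /\ lcomp m' m = lid B.

Definition LensRegularEpi {A B : Cat} (e : Lens A B) : Prop :=
  exists (C : Cat) (f g : Lens C A),
    lcomp f e = lcomp g e /\
    forall (D : Cat) (h : Lens A D), lcomp f h = lcomp g h ->
      exists! k : Lens B D, lcomp e k = h.

Definition LensStrongEpi {A B : Cat} (e : Lens A B) : Prop :=
  LensEpi e /\
  forall (C D : Cat) (m : Lens C D) (u : Lens A C) (v : Lens B D),
    LensMono m -> lcomp u m = lcomp e v ->
    exists d : Lens B C, lcomp e d = u /\ lcomp d m = v.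

Definition LensExtremalEpi {A B : Cat} (e : Lens A B) : Prop :=
  LensEpi e /\
  forall (C : Cat) (g : Lens A C) (m : Lens C B),
    LensMono m -> lcomp g m = e -> LensIso m.

(** An epimorphism [e : A -> B] of lenses is surjective on objects. Its image
    is closed under the codomains of morphisms (puts lift them), and for any
    such forward-closed set [I] of objects one can double the objects of [B]
    outside [I]; the two lenses from [B] into the result that pick the first
    copy everywhere, resp. the second copy outside [I], agree after [e], so
    [I] must be everything.

    A lens [e] that is surjective on objects coequalizes its kernel pair
    [A x_B A], whose projections are lenses: a lens [h] with equal composites
    takes equal values on objects, morphisms and lifts that [e] identifies,
    so it factors through [e] along any section of [e] on objects.  Hence
    every epimorphism is regular, and regular => strong => extremal => epi
    holds in any category. *)

From Stdlib Require Import Eqdep FunctionalExtensionality PropExtensionality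
  Classical ClassicalEpsilon.

(* Morphisms packed with their endpoints, to compare morphisms whose endpoints
   are only propositionally equal. *)
Definition arr {X : Cat} {x y : Ob X} (f : Hom x y) : {x : Ob X & {y : Ob X & Hom x y}} :=
  existT _ x (existT _ y f).

Section Arrows.
Context {X : Cat}.

Lemma arr_inj {x y : Ob X} (f g : Hom x y) : arr f = arr g -> f = g.
Proof. intro E. do 2 apply inj_pair2 in E. exact E. Qed.

Lemma arr_dom {x y x' y' : Ob X} (f : Hom x y) (g : Hom x' y') : arr f = arr g -> x = x'.
Proof. intro E. exact (f_equal (@projT1 _ _) E). Qed.

Lemma arr_cod {x y x' y' : Ob X} (f : Hom x y) (g : Hom x' y') : arr f = arr g -> y = y'.
Proof. intro E. exact (f_equal (fun s => projT1 (projT2 s)) E). Qed.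

Lemma existT_Hom_arr {x y1 y2 : Ob X} (f1 : Hom x y1) (f2 : Hom x y2) :
  existT (fun y => Hom x y) y1 f1 = existT _ y2 f2 <-> arr f1 = arr f2.
Proof.
  split; intro E.
  - exact (f_equal (existT _ x) E).
  - apply inj_pair2 in E. exact E.
Qed.

Lemma arr_idm (x y : Ob X) : x = y -> arr (idm x) = arr (idm y).
Proof. now intros ->. Qed.

Lemma arr_cmp {a b c a' b' c' : Ob X}
  (f : Hom a b) (g : Hom b c) (f' : Hom a' b') (g' : Hom b' c') :
  arr f = arr f' -> arr g = arr g' -> arr (cmp g f) = arr (cmp g' f').
Proof.
  intros Ef Eg.
  destruct (arr_dom _ _ Ef), (arr_cod _ _ Ef), (arr_cod _ _ Eg).
  apply arr_inj in Ef. apply arr_inj in Eg. now subst.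
Qed.

Definition cast_dom {x x' y : Ob X} (p : x = x') (f : Hom x y) : Hom x' y :=
  match p in _ = z return Hom z y with eq_refl => f end.

Definition cast_cod {x y y' : Ob X} (p : y = y') (f : Hom x y) : Hom x y' :=
  match p in _ = z return Hom x z with eq_refl => f end.

Lemma arr_cast_dom {x x' y : Ob X} (p : x = x') (f : Hom x y) : arr (cast_dom p f) = arr f.
Proof. now destruct p. Qed.

Lemma arr_cast_cod {x y y' : Ob X} (p : y = y') (f : Hom x y) : arr (cast_cod p f) = arr f.
Proof. now destruct p. Qed.

End Arrows.

Section LensBasics.
Context {A B : Cat}.

Lemma put_arr (L : Lens A B) a {b1 b2} (u1 : Hom (fo L a) b1) (u2 : Hom (fo L a) b2) :
  arr u1 = arr u2 -> put L a u1 = put L a u2.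
Proof.
  intro E. apply existT_Hom_arr in E.
  pose proof (f_equal (@projT1 _ _) E) as Eb. simpl in Eb. subst b2.
  apply inj_pair2 in E. now subst.
Qed.

Lemma put_lens_eq (L1 L2 : Lens A B) a {b} (u1 : Hom (fo L1 a) b) (u2 : Hom (fo L2 a) b) :
  L1 = L2 -> arr u1 = arr u2 -> put L1 a u1 = put L2 a u2.
Proof. intros <- E. now apply put_arr. Qed.

Lemma fo_put (L : Lens A B) a {b} (u : Hom (fo L a) b) : fo L (projT1 (put L a u)) = b.
Proof. exact (f_equal (@projT1 _ _) (put_lift _ _ L a b u)). Qed.

Lemma arr_fm_put (L : Lens A B) a {b} (u : Hom (fo L a) b) :
  arr (fm L (projT2 (put L a u))) = arr u.
Proof. apply existT_Hom_arr, put_lift. Qed.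

Lemma lens_lift (L : Lens A B) a {b b'} (u : Hom b b') :
  fo L a = b -> exists a' (f : Hom a a'), arr (fm L f) = arr u.
Proof.
  intros <-. exists (projT1 (put L a u)), (projT2 (put L a u)). apply arr_fm_put.
Qed.

Lemma put_cmp_arr (L : Lens A B) a a' (f : Hom a a') {b} (u : Hom (fo L a) b)
  c (v : Hom (fo L a') c) (w : Hom (fo L a) c) :
  put L a u = existT _ a' f -> arr w = arr (cmp v (fm L f)) ->
  put L a w = existT _ (projT1 (put L a' v)) (cmp (projT2 (put L a' v)) f).
Proof.
  intros Eu Ew.
  assert (Ef : put L a (fm L f) = existT _ a' f).
  { rewrite <- Eu. apply put_arr. rewrite <- (arr_fm_put L a u), Eu. reflexivity. }
  rewrite (put_arr L a w (cmp v (fm L f)) Ew).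
  exact (put_cmp _ _ L a a' (fm L f) f Ef c v).
Qed.

Lemma lens_proof_irrelevance fo' fm' put' p1 p2 p3 p4 p5 q1 q2 q3 q4 q5 :
  Build_Lens A B fo' fm' p1 p2 put' p3 p4 p5 = Build_Lens A B fo' fm' q1 q2 put' q3 q4 q5.
Proof.
  rewrite (proof_irrelevance _ p1 q1), (proof_irrelevance _ p2 q2),
    (proof_irrelevance _ p3 q3), (proof_irrelevance _ p4 q4), (proof_irrelevance _ p5 q5).
  reflexivity.
Qed.

Lemma lens_ext (L1 L2 : Lens A B) :
  (forall a, fo L1 a = fo L2 a) ->
  (forall a a' (f : Hom a a'), arr (fm L1 f) = arr (fm L2 f)) ->
  (forall a c (u1 : Hom (fo L1 a) c) (u2 : Hom (fo L2 a) c),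
      arr u1 = arr u2 -> put L1 a u1 = put L2 a u2) ->
  L1 = L2.
Proof.
  destruct L1 as [fo1 fm1 ? ? put1 ? ? ?], L2 as [fo2 fm2 ? ? put2 ? ? ?]; simpl.
  intros Efo Efm Eput.
  assert (fo1 = fo2) by (extensionality a; apply Efo). subst fo2.
  assert (fm1 = fm2).
  { extensionality a; extensionality a'; extensionality f. apply arr_inj, Efm. }
  assert (put1 = put2).
  { extensionality a; extensionality c; extensionality u. now apply Eput. }
  subst fm2 put2.
  apply lens_proof_irrelevance.
Qed.

End LensBasics.

Lemma lcompA {A B C D : Cat} (F : Lens A B) (G : Lens B C) (H : Lens C D) :
  lcomp (lcomp F G) H = lcomp F (lcomp G H).
Proof. destruct F, G, H. apply lens_proof_irrelevance. Qed.

Lemma lcomp_lid_l {A B : Cat} (F : Lens A B) : lcomp (lid A) F = F.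
Proof.
  apply lens_ext; try reflexivity.
  intros a c u1 u2 E. apply arr_inj in E. subst. simpl. now destruct (put F a u2).
Qed.

Lemma lcomp_lid_r {A B : Cat} (F : Lens A B) : lcomp F (lid B) = F.
Proof. destruct F. apply lens_proof_irrelevance. Qed.

Section GenericEpis.
Context {A B : Cat} (e : Lens A B).

Lemma regular_epi_epi : LensRegularEpi e -> LensEpi e.
Proof.
  intros (C & f & g & Efg & Hcoeq) D k1 k2 Ek.
  destruct (Hcoeq D (lcomp e k1)) as (k & _ & Hk).
  { now rewrite <- !lcompA, Efg. }
  rewrite <- (Hk k1 eq_refl). now apply Hk.
Qed.

Lemma regular_epi_strong : LensRegularEpi e -> LensStrongEpi e.
Proof.
  intro Hreg. split; [now apply regular_epi_epi|].
  destruct Hreg as (X & f & g & Efg & Hcoeq).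
  intros C D m u v Hm Esq.
  destruct (Hcoeq C u) as (d & Ed & _).
  { apply Hm. now rewrite !lcompA, Esq, <- !lcompA, Efg. }
  exists d. split; [exact Ed|].
  apply regular_epi_epi; [now exists X, f, g|].
  now rewrite <- lcompA, Ed.
Qed.

Lemma strong_epi_extremal : LensStrongEpi e -> LensExtremalEpi e.
Proof.
  intros [He Hfill]. split; [exact He|].
  intros C g m Hm Egm.
  destruct (Hfill C B m g (lid B) Hm) as (d & Ed & Edm).
  { now rewrite lcomp_lid_r. }
  exists d. split; [|exact Edm].
  apply Hm. now rewrite lcompA, Edm, lcomp_lid_r, lcomp_lid_l.
Qed.

End GenericEpis.
Section Doubling.
Context {B : Cat} (I : Ob B -> Prop)
  (I_closed : forall b b' (u : Hom b b'), I b -> I b').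

(* [B] with the objects outside [I] doubled: [(b, T)] is the second copy of [b]
   when [T] holds, and along a morphism the copy survives until it enters [I]. *)
Record DOb := { dbase : Ob B; dtag : Prop; dtag_out : dtag -> ~ I dbase }.

Definition DHom (x y : DOb) : Type :=
  {u : Hom (dbase x) (dbase y) | dtag y <-> dtag x /\ ~ I (dbase y)}.

Lemma DHom_eq {x y : DOb} (u v : DHom x y) : proj1_sig u = proj1_sig v -> u = v.
Proof. destruct u, v; simpl; intros ->. f_equal. apply proof_irrelevance. Qed.

Definition Did (x : DOb) : DHom x x.
Proof.
  exists (idm (dbase x)). split; [|now intros []].
  intro t. split; [exact t | exact (dtag_out x t)].
Defined.

Definition Dcmp {x y z : DOb} (v : DHom y z) (u : DHom x y) : DHom x z.
Proof.
  exists (cmp (proj1_sig v) (proj1_sig u)).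
  destruct u as [u Hu], v as [v Hv]; simpl.
  assert (notI : ~ I (dbase z) -> ~ I (dbase y)) by (intros Hz Hy; exact (Hz (I_closed _ _ v Hy))).
  rewrite Hv, Hu. intuition.
Defined.

Definition DCat : Cat.
Proof.
  refine {| Ob := DOb; Hom := DHom; idm := Did; cmp := @Dcmp |};
    intros; apply DHom_eq; simpl; auto using cmp_id_l, cmp_id_r, cmp_assoc.
Defined.

Lemma DOb_eq (x y : DOb) : dbase x = dbase y -> (dtag x <-> dtag y) -> x = y.
Proof.
  destruct x as [b T p], y as [b' T' p']; simpl; intros <- ET.
  apply propositional_extensionality in ET. subst T'.
  f_equal. apply proof_irrelevance.
Qed.

Lemma arr_DHom {x1 y1 x2 y2 : DOb} (u1 : @Hom DCat x1 y1) (u2 : @Hom DCat x2 y2) :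
  x1 = x2 -> y1 = y2 -> arr (proj1_sig u1) = arr (proj1_sig u2) -> arr u1 = arr u2.
Proof. intros <- <- E. apply arr_inj, DHom_eq in E. now subst. Qed.

Lemma arr_proj1_DHom {x1 y1 x2 y2 : DOb} (u1 : @Hom DCat x1 y1) (u2 : @Hom DCat x2 y2) :
  arr u1 = arr u2 -> arr (proj1_sig u1) = arr (proj1_sig u2).
Proof. intro E. exact (f_equal (fun s => arr (proj1_sig (projT2 (projT2 s)))) E). Qed.

Section TagLens.
Variable tag : Ob B -> Prop.
Hypothesis tag_out : forall b, tag b -> ~ I b.
Hypothesis tag_natural : forall b b' (u : Hom b b'), tag b' <-> tag b /\ ~ I b'.

Definition tag_ob (b : Ob B) : DOb := {| dbase := b; dtag := tag b; dtag_out := tag_out b |}.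

Definition tag_lens : Lens B DCat.
Proof.
  refine (@Build_Lens B DCat tag_ob
            (fun b b' u => exist _ u (tag_natural b b' u)) _ _
            (fun b y v => existT (fun b' => Hom b b') (dbase y) (proj1_sig v)) _ _ _);
    try reflexivity.
  - intros. now apply DHom_eq.
  - intros. now apply DHom_eq.
  - intros b y [v Hv]. simpl.
    assert (Ey : tag_ob (dbase y) = y).
    { apply DOb_eq; [reflexivity|]. simpl. now rewrite Hv, (tag_natural _ _ v). }
    apply (@existT_Hom_arr DCat). apply arr_DHom; [reflexivity|exact Ey|reflexivity].
  - intros b b' u f E y v. simpl in *. apply inj_pair2 in E. now rewrite E.
Defined.

End TagLens.

Lemma lens_epi_forward_closed_full {A : Cat} (e : Lens A B) :
  LensEpi e -> (forall a, I (fo e a)) -> forall b, I b.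
Proof.
  intros He HI b.
  assert (nat0 : forall b b' (u : Hom b b'), False <-> False /\ ~ I b') by tauto.
  assert (nat1 : forall b b' (u : Hom b b'), ~ I b' <-> ~ I b /\ ~ I b').
  { intros b0 b' u. split; [|tauto]. intro Hb'. split; [|exact Hb'].
    intro Hb. exact (Hb' (I_closed _ _ u Hb)). }
  pose (L0 := tag_lens (fun _ => False) (fun _ f _ => f) nat0).
  pose (L1 := tag_lens (fun b => ~ I b) (fun _ t => t) nat1).
  assert (tag_on_image : forall a, fo L0 (fo e a) = fo L1 (fo e a)).
  { intro a. apply DOb_eq; [reflexivity|]. simpl. specialize (HI a). tauto. }
  assert (E : L0 = L1).
  { apply He, lens_ext.
    - exact tag_on_image.
    - intros. apply arr_DHom; [apply tag_on_image..|reflexivity].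
    - intros a c u1 u2 Eu. simpl. apply put_arr. now apply arr_proj1_DHom in Eu. }
  apply NNPP. intro nI.
  assert (T : dtag (fo L1 b)) by exact nI.
  rewrite <- E in T. exact T.
Qed.

End Doubling.

Lemma lens_epi_surjective {A B : Cat} (e : Lens A B) :
  LensEpi e -> forall b, exists a, fo e a = b.
Proof.
  intro He.
  apply (lens_epi_forward_closed_full (fun b => exists a, fo e a = b)) with (e := e);
    [|exact He|].
  - intros b b' u [a <-]. exists (projT1 (put e a u)). apply fo_put.
  - intro a. now exists a.
Qed.

Section Pullback.
Context {A B C : Cat} (F : Lens A C) (G : Lens B C).

Record PbOb := { pb1 : Ob A; pb2 : Ob B; pb_eq : fo F pb1 = fo G pb2 }.

Record PbHom (x y : PbOb) := {
  ph1 : Hom (pb1 x) (pb1 y);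
  ph2 : Hom (pb2 x) (pb2 y);
  ph_eq : arr (fm F ph1) = arr (fm G ph2) }.
Arguments ph1 {x y}.
Arguments ph2 {x y}.
Arguments ph_eq {x y}.

Lemma PbHom_eq {x y : PbOb} (m n : PbHom x y) : ph1 m = ph1 n -> ph2 m = ph2 n -> m = n.
Proof.
  destruct m, n; simpl; intros <- <-. f_equal. apply proof_irrelevance.
Qed.

Definition Pbid (x : PbOb) : PbHom x x.
Proof.
  refine {| ph1 := idm (pb1 x); ph2 := idm (pb2 x) |}.
  rewrite !fm_id. apply arr_idm, pb_eq.
Defined.

Definition Pbcmp {x y z : PbOb} (n : PbHom y z) (m : PbHom x y) : PbHom x z.
Proof.
  refine {| ph1 := cmp (ph1 n) (ph1 m); ph2 := cmp (ph2 n) (ph2 m) |}.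
  rewrite !fm_cmp. apply arr_cmp; apply ph_eq.
Defined.

Definition PbCat : Cat.
Proof.
  refine {| Ob := PbOb; Hom := PbHom; idm := Pbid; cmp := @Pbcmp |};
    intros; apply PbHom_eq; simpl; auto using cmp_id_l, cmp_id_r, cmp_assoc.
Defined.

Lemma existT_PbHom {x y1 y2 : PbOb} (m1 : @Hom PbCat x y1) (m2 : @Hom PbCat x y2) :
  arr (ph1 m1) = arr (ph1 m2) -> arr (ph2 m1) = arr (ph2 m2) ->
  existT (fun y => @Hom PbCat x y) y1 m1 = existT _ y2 m2.
Proof.
  intros E1 E2.
  destruct y1 as [a1 b1 p1], y2 as [a2 b2 p2].
  pose proof (arr_cod _ _ E1) as Ea. pose proof (arr_cod _ _ E2) as Eb.
  simpl in Ea, Eb. subst a2 b2. destruct (proof_irrelevance _ p1 p2).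
  apply arr_inj in E1. apply arr_inj in E2.
  now rewrite (PbHom_eq m1 m2 E1 E2).
Qed.

Definition pb_fst_put (x : PbOb) (a' : Ob A) (u : Hom (pb1 x) a') : {y : PbOb & PbHom x y} :=
  let w := put G (pb2 x) (cast_dom (pb_eq x) (fm F u)) in
  let y := {| pb1 := a'; pb2 := projT1 w; pb_eq := eq_sym (fo_put G _ _) |} in
  existT (PbHom x) y (Build_PbHom x y u (projT2 w)
    (eq_trans (eq_sym (arr_cast_dom _ _)) (eq_sym (arr_fm_put G _ _)))).

Definition pb_fst : Lens PbCat A.
Proof.
  refine (@Build_Lens PbCat A pb1 (fun x y m => ph1 m) _ _ pb_fst_put _ _ _);
    try reflexivity.
  - intro x. apply existT_PbHom; [reflexivity|]. simpl.
    rewrite (put_arr G (pb2 x) _ (idm (fo G (pb2 x)))), put_id; [reflexivity|].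
    rewrite arr_cast_dom, fm_id. apply arr_idm, pb_eq.
  - intros x y u m Eu a v.
    assert (Eph1 : u = ph1 m).
    { apply arr_inj. exact (f_equal (fun s => arr (ph1 (projT2 s))) Eu). }
    assert (Eput : put G (pb2 x) (cast_dom (pb_eq x) (fm F u)) = existT _ (pb2 y) (ph2 m)).
    { pose proof (f_equal (fun t => existT (fun b => Hom (pb2 x) b) (pb2 (projT1 t))
                                           (ph2 (projT2 t))) Eu) as E.
      simpl in E. now rewrite <- sigT_eta in E. }
    subst u. apply existT_PbHom; [reflexivity|]. simpl.
    erewrite put_cmp_arr; [reflexivity|exact Eput|].
    rewrite arr_cast_dom, fm_cmp.
    apply arr_cmp; [apply ph_eq|symmetry; apply arr_cast_dom].
Defined.

Definition pb_snd_put (x : PbOb) (b' : Ob B) (u : Hom (pb2 x) b') : {y : PbOb & PbHom x y} :=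
  let w := put F (pb1 x) (cast_dom (eq_sym (pb_eq x)) (fm G u)) in
  let y := {| pb1 := projT1 w; pb2 := b'; pb_eq := fo_put F _ _ |} in
  existT (PbHom x) y (Build_PbHom x y (projT2 w) u
    (eq_trans (arr_fm_put F _ _) (arr_cast_dom _ _))).

Definition pb_snd : Lens PbCat B.
Proof.
  refine (@Build_Lens PbCat B pb2 (fun x y m => ph2 m) _ _ pb_snd_put _ _ _);
    try reflexivity.
  - intro x. apply existT_PbHom; [|reflexivity]. simpl.
    rewrite (put_arr F (pb1 x) _ (idm (fo F (pb1 x)))), put_id; [reflexivity|].
    rewrite arr_cast_dom, fm_id. symmetry. apply arr_idm, pb_eq.
  - intros x y u m Eu b v.
    assert (Eph2 : u = ph2 m).
    { apply arr_inj. exact (f_equal (fun s => arr (ph2 (projT2 s))) Eu). }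
    assert (Eput : put F (pb1 x) (cast_dom (eq_sym (pb_eq x)) (fm G u)) = existT _ (pb1 y) (ph1 m)).
    { pose proof (f_equal (fun t => existT (fun a => Hom (pb1 x) a) (pb1 (projT1 t))
                                           (ph1 (projT2 t))) Eu) as E.
      simpl in E. now rewrite <- sigT_eta in E. }
    subst u. apply existT_PbHom; [|reflexivity]. simpl.
    erewrite put_cmp_arr; [reflexivity|exact Eput|].
    rewrite arr_cast_dom, fm_cmp.
    apply arr_cmp; [symmetry; apply ph_eq|symmetry; apply arr_cast_dom].
Defined.

Lemma pb_square : lcomp pb_fst F = lcomp pb_snd G.
Proof.
  apply lens_ext.
  - exact pb_eq.
  - intros x y m. exact (ph_eq m).
  - intros x c u1 u2 Eu. simpl. apply existT_PbHom; simpl.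
    + erewrite put_arr; [reflexivity|]. now rewrite arr_cast_dom, arr_fm_put.
    + erewrite put_arr; [reflexivity|]. now rewrite arr_cast_dom, arr_fm_put.
Qed.

End Pullback.

Section KernelPairCoequalizer.
Context {A B D : Cat} (e : Lens A B) (h : Lens A D).
Hypothesis h_coeq : lcomp (pb_fst e e) h = lcomp (pb_snd e e) h.

Lemma coeq_fo a1 a2 : fo e a1 = fo e a2 -> fo h a1 = fo h a2.
Proof.
  intro p. exact (f_equal (fun L : Lens (PbCat e e) D => fo L (Build_PbOb e e a1 a2 p)) h_coeq).
Qed.

Lemma coeq_fm {a1 a1' a2 a2'} (m1 : Hom a1 a1') (m2 : Hom a2 a2') :
  arr (fm e m1) = arr (fm e m2) -> arr (fm h m1) = arr (fm h m2).
Proof.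
  intro E.
  pose (x := Build_PbOb e e a1 a2 (arr_dom _ _ E)).
  pose (y := Build_PbOb e e a1' a2' (arr_cod _ _ E)).
  exact (f_equal (fun L : Lens (PbCat e e) D => arr (@fm _ _ L x y (Build_PbHom e e x y m1 m2 E)))
           h_coeq).
Qed.

Lemma coeq_put a1 a2 c (d1 : Hom (fo h a1) c) (d2 : Hom (fo h a2) c) {b} (u : Hom (fo e a1) b) :
  fo e a1 = fo e a2 -> arr d1 = arr d2 ->
  arr u = arr (fm e (projT2 (put h a2 d2))) -> put h a1 d1 = put e a1 u.
Proof.
  intros p Ed Eu.
  pose (x := Build_PbOb e e a1 a2 p : Ob (PbCat e e)).
  pose proof (put_lens_eq (lcomp (pb_fst e e) h) (lcomp (pb_snd e e) h) x d1 d2 h_coeq Ed) as E.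
  pose (fst_part := fun t : {y : Ob (PbCat e e) & Hom x y} =>
         existT (fun a => Hom a1 a) (fo (pb_fst e e) (projT1 t)) (fm (pb_fst e e) (projT2 t))).
  pose proof (f_equal fst_part E) as E1. unfold fst_part in E1.
  simpl in E1. rewrite <- sigT_eta in E1. rewrite E1, <- sigT_eta.
  apply put_arr. rewrite arr_cast_dom. now symmetry.
Qed.

Variable s : Ob B -> Ob A.
Hypothesis s_sect : forall b, fo e (s b) = b.

Definition sect_lift {b b'} (u : Hom b b') : {a : Ob A & Hom (s b) a} :=
  put e (s b) (cast_dom (eq_sym (s_sect b)) u).

Definition factor_fm {b b'} (u : Hom b b') : Hom (fo h (s b)) (fo h (s b')) :=
  cast_cod (coeq_fo _ _ (eq_trans (fo_put e _ _) (eq_sym (s_sect b'))))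
    (fm h (projT2 (sect_lift u))).

Lemma arr_factor_fm {a a'} (f : Hom a a') {b b'} (u : Hom b b') :
  arr (fm e f) = arr u -> arr (factor_fm u) = arr (fm h f).
Proof.
  intro E. unfold factor_fm, sect_lift. rewrite arr_cast_cod. apply coeq_fm.
  now rewrite arr_fm_put, arr_cast_dom.
Qed.

Definition factor_put b c (d : Hom (fo h (s b)) c) : {b' : Ob B & Hom b b'} :=
  existT _ (fo e (projT1 (put h (s b) d))) (cast_dom (s_sect b) (fm e (projT2 (put h (s b) d)))).

Lemma factor_fm_id b : factor_fm (idm b) = idm (fo h (s b)).
Proof.
  apply arr_inj. rewrite (arr_factor_fm (idm (s b))), fm_id; [reflexivity|].
  rewrite fm_id. apply arr_idm, s_sect.
Qed.

Lemma factor_fm_cmp {b b' b''} (u : Hom b b') (v : Hom b' b'') :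
  factor_fm (cmp v u) = cmp (factor_fm v) (factor_fm u).
Proof.
  apply arr_inj.
  destruct (lens_lift e (s b) u (s_sect b)) as (a' & f & Ef).
  destruct (lens_lift e a' v (arr_cod _ _ Ef)) as (a'' & g & Eg).
  rewrite (arr_factor_fm (cmp g f)).
  - rewrite fm_cmp. apply arr_cmp; symmetry; now apply arr_factor_fm.
  - rewrite fm_cmp. now apply arr_cmp.
Qed.

Lemma factor_put_lift b c (d : Hom (fo h (s b)) c) :
  existT (fun y => Hom (fo h (s b)) y) (fo h (s (projT1 (factor_put b c d))))
    (factor_fm (projT2 (factor_put b c d)))
  = existT _ c d.
Proof.
  apply existT_Hom_arr. simpl. rewrite (arr_factor_fm (projT2 (put h (s b) d))).
  - apply arr_fm_put.
  - now rewrite arr_cast_dom.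
Qed.

Lemma factor_put_id b : factor_put b _ (idm (fo h (s b))) = existT _ b (idm b).
Proof.
  apply existT_Hom_arr. unfold factor_put. simpl. rewrite arr_cast_dom.
  rewrite put_id. simpl. rewrite fm_id. apply arr_idm, s_sect.
Qed.

Lemma factor_put_cmp b b' (u : Hom (fo h (s b)) (fo h (s b'))) (f : Hom b b') :
  factor_put b _ u = existT _ b' f ->
  forall c (v : Hom (fo h (s b')) c),
    factor_put b c (cmp v u)
    = existT _ (projT1 (factor_put b' c v)) (cmp (projT2 (factor_put b' c v)) f).
Proof.
  unfold factor_put at 1. destruct (put h (s b) u) as [a1 g] eqn:Eg. simpl.
  intros Ef c v.
  apply existT_Hom_arr in Ef. rewrite arr_cast_dom in Ef.
  assert (q : fo e a1 = fo e (s b')) by (rewrite s_sect; exact (arr_cod _ _ Ef)).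
  pose (v' := cast_dom (eq_sym (coeq_fo _ _ q)) v).
  assert (Ecmp : put h (s b) (cmp v u)
                 = existT _ (projT1 (put h a1 v')) (cmp (projT2 (put h a1 v')) g)).
  { apply (put_cmp_arr h _ _ g u); [exact Eg|].
    apply arr_cmp; [|symmetry; apply arr_cast_dom].
    rewrite <- (arr_fm_put h _ u), Eg. reflexivity. }
  assert (Ev' : put h a1 v'
                = put e a1 (cast_dom (eq_sym q) (fm e (projT2 (put h (s b') v))))).
  { apply (coeq_put _ (s b') _ _ v); [exact q|apply arr_cast_dom|apply arr_cast_dom]. }
  unfold factor_put. apply existT_Hom_arr. simpl.
  rewrite !arr_cast_dom, Ecmp. simpl. rewrite fm_cmp.
  apply arr_cmp; [exact Ef|].
  now rewrite Ev', arr_fm_put, !arr_cast_dom.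
Qed.

Definition factor_lens : Lens B D :=
  Build_Lens B D (fun b => fo h (s b)) (@factor_fm) factor_fm_id (@factor_fm_cmp)
    factor_put factor_put_lift factor_put_id factor_put_cmp.

Lemma lcomp_factor_lens : lcomp e factor_lens = h.
Proof.
  apply lens_ext.
  - intro a. apply coeq_fo, s_sect.
  - intros a a' f. now apply arr_factor_fm.
  - intros a c u1 u2 Eu. simpl. symmetry.
    apply (coeq_put a (s (fo e a)) c u2 u1); [now rewrite s_sect|now symmetry|].
    apply arr_cast_dom.
Qed.

End KernelPairCoequalizer.

Lemma lens_epi_regular {A B : Cat} (e : Lens A B) : LensEpi e -> LensRegularEpi e.
Proof.
  intro He.
  destruct (choice _ (lens_epi_surjective e He)) as [s s_sect].
  exists (PbCat e e), (pb_fst e e), (pb_snd e e). split; [apply pb_square|].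
  intros D h h_coeq. exists (factor_lens e h h_coeq s s_sect). split.
  - apply lcomp_factor_lens.
  - intros k Ek. apply He. rewrite Ek. apply lcomp_factor_lens.
Qed.

Theorem corollary6p5 (A B : Cat) (e : Lens A B) :
  (LensEpi e <-> LensRegularEpi e) /\
  (LensEpi e <-> LensStrongEpi e) /\
  (LensEpi e <-> LensExtremalEpi e).
Proof.
  assert (strong : LensEpi e -> LensStrongEpi e)
    by (intro He; apply regular_epi_strong, lens_epi_regular, He).
  split; [|split]; split.
  - apply lens_epi_regular.
  - apply regular_epi_epi.
  - exact strong.
  - apply proj1.
  - intro He. apply strong_epi_extremal, strong, He.
  - apply proj1.
Qed.
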